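(* Let $(X,d)$ be a metric space, $q_1,q_2>0$, $D>0$, and suppose that for each pair $x,y\in X$ there is a path $\eta_{xy}=\eta(x,y):[0,1]\to X$ from $x$ to $y$ satisfying (G1) $\mathrm{diam}(\eta_{xy})\le \frac{D\,d(x,y)}{2}$, (G2) $d_{\mathrm{Haus}}(\eta_{xy}([s,t]),\eta(\eta_{xy}(s),\eta_{xy}(t)))\le D$ for all $0\le s\le t\le1$, and (G3) $\eta_{xy}\subset\mathcal{N}_D(\eta_{xz}\cup\eta_{zy})$ for all $x,y,z\in X$. Let $n\in\mathbb{N}$ and let $\lambda:[0,2^n]\to X$ be a $(q_1,q_2)$-coarsely Lipschitz path. Then $$\eta(\lambda(0),\lambda(2^n))\subset \mathcal{N}_{\,nD+\frac12(q_1+q_2)D}\big(\lambda([0,2^n])\big),$$ i.e. $\eta(\lambda(0),\lambda(2^n))$ lies in the $\big(D\log_2\ell(\lambda)+\tfrac12(q_1+q_2)D\big)$-neighbourhood of $\lambda$, where $\ell(\lambda)=2^n$.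
   Context: A map $\lambda:[a,b]\to X$ is $(q_1,q_2)$-coarsely Lipschitz if $d(\lambda(s),\lambda(t))\le q_1|s-t|+q_2$ for all $s,t$. For $A\subset X$ and $r\ge0$, $\mathcal{N}_r(A)=\{p\in X: d(p,A)\le r\}$; $d_{\mathrm{Haus}}$ is Hausdorff distance; paths are identified with their images. For a path $\lambda:[0,m]\to X$, $\ell(\lambda)=m$ is its parametrisation length. *)

From Stdlib Require Import Reals.
Open Scope R_scope.

Definition is_metric {X : Type} (d : X -> X -> R) : Prop :=
  (forall x y, 0 <= d x y) /\
  (forall x y, d x y = 0 <-> x = y) /\
  (forall x y, d x y = d y x) /\
  (forall x y z, d x z <= d x y + d y z).

(* p ∈ N_r(A), i.e. d(p,A) = inf_{a ∈ A} d(p,a) <= r, with the infimum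
   written out. *)
Definition in_nbhd {X : Type} (d : X -> X -> R) (r : R) (A : X -> Prop) (p : X) : Prop :=
  forall eps, 0 < eps -> exists a, A a /\ d p a <= r + eps.

Definition subset {X : Type} (A B : X -> Prop) : Prop := forall p, A p -> B p.

(* d_Haus(A,B) <= r, i.e. max(sup_{a∈A} d(a,B), sup_{b∈B} d(b,A)) <= r. *)
Definition haus_le {X : Type} (d : X -> X -> R) (A B : X -> Prop) (r : R) : Prop :=
  subset A (in_nbhd d r B) /\ subset B (in_nbhd d r A).

Definition img {X : Type} (f : R -> X) (s t : R) : X -> Prop :=
  fun p => exists u, s <= u <= t /\ p = f u.

Definition diam_le {X : Type} (d : X -> X -> R) (f : R -> X) (s t r : R) : Prop :=
  forall u v, s <= u <= t -> s <= v <= t -> d (f u) (f v) <= r.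

Definition coarsely_lipschitz {X : Type} (d : X -> X -> R) (a b q1 q2 : R)
  (lam : R -> X) : Prop :=
  forall s t, a <= s <= b -> a <= t <= b -> d (lam s) (lam t) <= q1 * Rabs (s - t) + q2.

(* For n = 0, (G1) keeps the whole geodesic within
   D d(lam 0, lam 1) / 2 <= (q1 + q2) D / 2 of its starting point lam 0.
   For n + 1, (G3) puts eta(lam 0, lam 2^(n+1)) in the D-neighbourhood of
   eta(lam 0, lam 2^n) and eta(lam 2^n, lam 2^(n+1)); each of these is
   controlled by the induction hypothesis applied to one half of lam, so
   every doubling of the length costs one additional D. *)

From Stdlib Require Import Reals Lra.
Open Scope R_scope.

Section Neighbourhoods.

Variables (X : Type) (d : X -> X -> R).

Lemma in_nbhd_trans (r1 r2 : R) (A B : X -> Prop) (p : X) :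
  is_metric d -> in_nbhd d r1 A p -> subset A (in_nbhd d r2 B) ->
  in_nbhd d (r1 + r2) B p.
Proof.
  intros [_ [_ [_ Htri]]] HpA HAB eps Heps.
  destruct (HpA (eps / 2)) as [a [Aa Hpa]]; [lra|].
  destruct (HAB a Aa (eps / 2)) as [b [Bb Hab]]; [lra|].
  exists b; split; [exact Bb|].
  pose proof (Htri p a b); lra.
Qed.

Lemma in_nbhd_subset (r : R) (A B : X -> Prop) :
  subset A B -> subset (in_nbhd d r A) (in_nbhd d r B).
Proof.
  intros HAB p Hp eps Heps.
  destruct (Hp eps Heps) as [a [Aa Hpa]].
  exists a; split; [apply HAB|]; assumption.
Qed.

Lemma in_nbhd_le (r r' : R) (A : X -> Prop) :
  r <= r' -> subset (in_nbhd d r A) (in_nbhd d r' A).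
Proof.
  intros Hr p Hp eps Heps.
  destruct (Hp eps Heps) as [a [Aa Hpa]].
  exists a; split; [exact Aa | lra].
Qed.

Lemma in_nbhd_point (r : R) (x p : X) :
  d p x <= r -> in_nbhd d r (fun q => q = x) p.
Proof. intros Hpx eps Heps; exists x; split; [reflexivity | lra]. Qed.

End Neighbourhoods.

Lemma img_subset {X : Type} (f : R -> X) (s t s' t' : R) :
  s' <= s -> t <= t' -> subset (img f s t) (img f s' t').
Proof. intros Hs Ht p [u [Hu ->]]; exists u; split; [lra | reflexivity]. Qed.

Lemma coarsely_lipschitz_sub {X : Type} (d : X -> X -> R) (a b a' b' q1 q2 : R)
  (lam : R -> X) :
  a <= a' -> b' <= b ->
  coarsely_lipschitz d a b q1 q2 lam -> coarsely_lipschitz d a' b' q1 q2 lam.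
Proof. intros Ha Hb Hl s t Hs Ht; apply Hl; lra. Qed.

Section Geodesics.

Variables (X : Type) (d : X -> X -> R) (D : R) (eta : X -> X -> R -> X).

Hypothesis metric_d : is_metric d.
Hypothesis D_ge0 : 0 <= D.
Hypothesis eta_ends : forall x y, eta x y 0 = x /\ eta x y 1 = y.
Hypothesis eta_diam : forall x y, diam_le d (eta x y) 0 1 (D * d x y / 2).
Hypothesis eta_thin : forall x y z, subset (img (eta x y) 0 1)
  (in_nbhd d D (fun p => img (eta x z) 0 1 p \/ img (eta z y) 0 1 p)).

Lemma eta_near_start (x y : X) :
  subset (img (eta x y) 0 1) (in_nbhd d (D * d x y / 2) (fun q => q = x)).
Proof.
  intros p [u [Hu ->]]; apply in_nbhd_point.
  rewrite <- (proj1 (eta_ends x y)) at 2.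
  apply eta_diam; lra.
Qed.

Lemma eta_near_dyadic_path (q1 q2 : R) (n : nat) (a : R) (lam : R -> X) :
  coarsely_lipschitz d a (a + 2 ^ n) q1 q2 lam ->
  subset (img (eta (lam a) (lam (a + 2 ^ n))) 0 1)
         (in_nbhd d (INR n * D + (q1 + q2) * D / 2) (img lam a (a + 2 ^ n))).
Proof.
  revert a; induction n as [|n IH]; intros a Hlam p Hp; simpl pow in *.
  - assert (Hd : d (lam a) (lam (a + 1)) <= q1 + q2).
    { pose proof (Hlam a (a + 1) ltac:(lra) ltac:(lra)) as H.
      replace (a - (a + 1)) with (- (1)) in H by ring.
      rewrite Rabs_Ropp, Rabs_R1 in H; lra. }
    apply (in_nbhd_le _ _ (D * d (lam a) (lam (a + 1)) / 2)).
    { rewrite INR_0, Rmult_0_l, Rplus_0_l, (Rmult_comm _ D).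
      apply Rmult_le_compat_r; [lra|]. apply Rmult_le_compat_l; lra. }
    apply (in_nbhd_subset _ _ _ (fun q => q = lam a)).
    { intros q ->; exists a; split; [lra | reflexivity]. }
    exact (eta_near_start _ _ p Hp).
  - set (m := a + 2 ^ n).
    assert (Hpos : 0 < 2 ^ n) by (apply pow_lt; lra).
    assert (Hend : a + 2 * 2 ^ n = m + 2 ^ n) by (unfold m; ring).
    rewrite Hend in *.
    assert (Hleft := IH a (coarsely_lipschitz_sub d a (m + 2 ^ n) a m q1 q2 lam
                             ltac:(lra) ltac:(lra) Hlam)).
    assert (Hright := IH m (coarsely_lipschitz_sub d a (m + 2 ^ n) m (m + 2 ^ n)
                              q1 q2 lam ltac:(unfold m; lra) ltac:(lra) Hlam)).
    replace (INR (S n) * D + (q1 + q2) * D / 2)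
      with (D + (INR n * D + (q1 + q2) * D / 2)) by (rewrite S_INR; ring).
    apply (in_nbhd_trans _ _ _ _ _ _ _ metric_d (eta_thin _ _ (lam m) p Hp)).
    intros r [Hr | Hr].
    + apply (in_nbhd_subset _ _ _ _ _ (img_subset lam a m a (m + 2 ^ n)
               ltac:(lra) ltac:(lra))).
      exact (Hleft r Hr).
    + apply (in_nbhd_subset _ _ _ _ _ (img_subset lam m (m + 2 ^ n) a (m + 2 ^ n)
               ltac:(unfold m; lra) ltac:(lra))).
      exact (Hright r Hr).
Qed.

End Geodesics.

Theorem mainTheorem4 (X : Type) (d : X -> X -> R) (q1 q2 D : R)
  (eta : X -> X -> R -> X) (n : nat) (lam : R -> X) :
  is_metric d ->
  0 < q1 -> 0 < q2 -> 0 < D ->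
  (forall x y, eta x y 0 = x /\ eta x y 1 = y) ->
  (forall x y, diam_le d (eta x y) 0 1 (D * d x y / 2)) ->
  (forall x y s t, 0 <= s -> s <= t -> t <= 1 ->
     haus_le d (img (eta x y) s t)
               (img (eta (eta x y s) (eta x y t)) 0 1) D) ->
  (forall x y z, subset (img (eta x y) 0 1)
     (in_nbhd d D (fun p => img (eta x z) 0 1 p \/ img (eta z y) 0 1 p))) ->
  coarsely_lipschitz d 0 (2 ^ n) q1 q2 lam ->
  subset (img (eta (lam 0) (lam (2 ^ n))) 0 1)
         (in_nbhd d (INR n * D + (q1 + q2) * D / 2) (img lam 0 (2 ^ n))).
Proof.
  intros Hm _ _ HD Hends Hdiam _ Hthin Hlam.
  pose proof (eta_near_dyadic_path X d D eta Hm ltac:(lra) Hends Hdiam Hthin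
                q1 q2 n 0 lam) as Hdyadic.
  rewrite Rplus_0_l in Hdyadic.
  exact (Hdyadic Hlam).
Qed.
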